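(* Let $A\in B(\mathbb{H})$ with $A\ge0$ and let $X,Y\in B_A(\mathbb{H})$. Then \[ w_A(Y^{\sharp_A}X)\le\frac14\big\|XX^{\sharp_A}+YY^{\sharp_A}\big\|_A+\frac12 w_A(XY^{\sharp_A}). \]
   Context: $\mathbb{H}$ is a complex Hilbert space, $B(\mathbb{H})$ the bounded linear operators on it, $O$ the zero operator. For a positive operator $A\in B(\mathbb{H})$ ($A\ge0$) set $\langle x,y\rangle_A=\langle Ax,y\rangle$ and $\|x\|_A=\sqrt{\langle x,x\rangle_A}$; $A>0$ means $\langle Ax,x\rangle>0$ for all $x\ne0$. For $T\in B(\mathbb{H})$: $\|T\|_A=\sup\{\|Tx\|_A/\|x\|_A: x\in\overline{R(A)},x\ne0\}$, where $R(A)$ is the range of $A$; $W_A(T)=\{\langle Tx,x\rangle_A:x\in\mathbb{H},\|x\|_A=1\}$, $w_A(T)=\sup\{|\lambda|:\lambda\in W_A(T)\}$ and $m_A(T)=\inf\{|\lambda|:\lambda\in W_A(T)\}$. $B_A(\mathbb{H})$ is the set of $T\in B(\mathbb{H})$ for which some $R\in B(\mathbb{H})$ satisfies $AR=T^*A$; for such $T$, $T^{\sharp_A}$ denotes the distinguished such $R$, namely the unique solution of $AR=T^*A$ with range contained in $\overline{R(A)}$ (when $A>0$ it is the unique solution). $\mathrm{Re}_A(T)=\frac12(T+T^{\sharp_A})$. *)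

From Stdlib Require Import Reals ClassicalEpsilon.
Open Scope R_scope.
Set Implicit Arguments.

Record C := mkC { Cre : R; Cim : R }.
Definition C0 : C := mkC 0 0.
Definition C1 : C := mkC 1 0.
Definition Cadd (a b : C) : C := mkC (Cre a + Cre b) (Cim a + Cim b).
Definition Cmul (a b : C) : C :=
  mkC (Cre a * Cre b - Cim a * Cim b) (Cre a * Cim b + Cim a * Cre b).
Definition Cconj (a : C) : C := mkC (Cre a) (- Cim a).
Definition Cmod (a : C) : R := sqrt (Cre a ^ 2 + Cim a ^ 2).

Record CHilbert := {
  hv :> Type;
  hadd : hv -> hv -> hv;
  hzero : hv;
  hopp : hv -> hv;
  hscal : C -> hv -> hv;
  hinner : hv -> hv -> C;
  hadd_assoc : forall x y z, hadd x (hadd y z) = hadd (hadd x y) z;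
  hadd_comm : forall x y, hadd x y = hadd y x;
  hadd_0 : forall x, hadd x hzero = x;
  hadd_opp : forall x, hadd x (hopp x) = hzero;
  hscal_1 : forall x, hscal C1 x = x;
  hscal_assoc : forall a b x, hscal a (hscal b x) = hscal (Cmul a b) x;
  hscal_addv : forall a x y, hscal a (hadd x y) = hadd (hscal a x) (hscal a y);
  hscal_adds : forall a b x, hscal (Cadd a b) x = hadd (hscal a x) (hscal b x);
  hinner_addl : forall x y z, hinner (hadd x y) z = Cadd (hinner x z) (hinner y z);
  hinner_scall : forall a x y, hinner (hscal a x) y = Cmul a (hinner x y);
  hinner_conj : forall x y, hinner y x = Cconj (hinner x y);
  hinner_pos : forall x, 0 <= Cre (hinner x x);
  hinner_def : forall x, hinner x x = C0 -> x = hzero;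
  hcomplete : forall u : nat -> hv,
    (forall eps, 0 < eps -> exists N, forall m n, (N <= m)%nat -> (N <= n)%nat ->
        sqrt (Cre (hinner (hadd (u m) (hopp (u n))) (hadd (u m) (hopp (u n))))) < eps) ->
    exists l, forall eps, 0 < eps -> exists N, forall n, (N <= n)%nat ->
        sqrt (Cre (hinner (hadd (u n) (hopp l)) (hadd (u n) (hopp l)))) < eps
}.

Arguments hadd {_}. Arguments hzero {_}. Arguments hopp {_}.
Arguments hscal {_}. Arguments hinner {_}.

Section Ops.
Context {H : CHilbert}.

Definition hsub (x y : H) : H := hadd x (hopp y).
Definition hnorm (x : H) : R := sqrt (Cre (hinner x x)).

Definition is_linear (T : H -> H) : Prop :=
  (forall x y, T (hadd x y) = hadd (T x) (T y)) /\
  (forall a x, T (hscal a x) = hscal a (T x)).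
Definition is_bounded (T : H -> H) : Prop :=
  is_linear T /\ exists M, forall x, hnorm (T x) <= M * hnorm x.

Definition positive_op (A : H -> H) : Prop :=
  is_bounded A /\ forall x, Cim (hinner (A x) x) = 0 /\ 0 <= Cre (hinner (A x) x).

Definition innerA (A : H -> H) (x y : H) : C := hinner (A x) y.
Definition normA (A : H -> H) (x : H) : R := sqrt (Cre (innerA A x x)).

Definition in_closure_range (A : H -> H) (x : H) : Prop :=
  forall eps, 0 < eps -> exists y, hnorm (hsub x (A y)) < eps.

Definition is_adjoint (T S : H -> H) : Prop :=
  forall x y, hinner (T x) y = hinner x (S y).

Definition solves_AR (A T R0 : H -> H) : Prop :=
  is_bounded R0 /\ exists S, is_adjoint T S /\ forall x, A (R0 x) = S (A x).

Definition in_BA (A T : H -> H) : Prop :=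
  is_bounded T /\ exists R0, solves_AR A T R0.

Definition is_sharpA (A T R0 : H -> H) : Prop :=
  solves_AR A T R0 /\ forall x, in_closure_range A (R0 x).

(* supremum of a set of nonnegative reals (the empty set has sup 0) *)
Definition supR (E : R -> Prop) : R :=
  epsilon (inhabits 0) (fun l => is_lub (fun r => E r \/ r = 0) l).

Definition opnormA (A T : H -> H) : R :=
  supR (fun r => exists x, in_closure_range A x /\ x <> hzero /\
                           r = normA A (T x) / normA A x).

Definition numrangeA (A T : H -> H) (lam : C) : Prop :=
  exists x, normA A x = 1 /\ lam = innerA A (T x) x.
Definition wA (A T : H -> H) : R :=
  supR (fun r => exists lam, numrangeA A T lam /\ r = Cmod lam).

End Ops.

(* Put T := X X^# + Y Y^#. Since <X^# w, X^# w>_A = <X X^# w, w>_A, one has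
   ||X^# w||_A^2 + ||Y^# w||_A^2 = Re <T w, w>_A <= ||T||_A ||w||_A^2, and
   <X Y^# w, w>_A = <Y^# w, X^# w>_A.  For a unit vector x, Buzano's inequality applied to
   x, X^# w, Y^# w therefore gives, for every w,
     |<X x, w>_A| |<w, Y x>_A| <= (||T||_A / 4 + w_A(X Y^#) / 2) ||w||_A^2,
   and testing this at w = X x + <X x, Y x>_A Y x yields
   |<Y^# X x, x>_A| = |<X x, Y x>_A| <= ||T||_A / 4 + w_A(X Y^#) / 2.
   Two facts about the semi-inner product make the A-quantities behave: an A-symmetric bounded
   operator is A-bounded (iterate ||S z||_A^2 <= ||z||_A ||S^2 z||_A along the powers 2^k), and
   R(A) is dense for ||.||_A (gradient descent r <- r - A r / ||A||), so that ||T||_A, a supremum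
   over the closure of R(A) only, still controls ||T z||_A for every z. *)

From Pilot Require Import Defs.
From Stdlib Require Import Reals ClassicalEpsilon Lra Psatz Lia.
Open Scope R_scope.
Local Notation C := Defs.C.
Local Notation C0 := Defs.C0.
Local Notation C1 := Defs.C1.

Lemma C_ext (a b : C) : Cre a = Cre b -> Cim a = Cim b -> a = b.
Proof. destruct a, b; simpl; intros; subst; reflexivity. Qed.

Ltac csimpl := cbv [Cadd Cmul Cconj Defs.C0 Defs.C1] in *; cbn [Cre Cim] in *.

Lemma sqrt_le_of_le_sq (x k : R) : 0 <= k -> x <= k * k -> sqrt x <= k.
Proof. intros Hk Hx. rewrite <- (sqrt_square k Hk). apply sqrt_le_1_alt. exact Hx. Qed.

Lemma le_of_sq_le (d t : R) : 0 <= t -> d * d <= t * t -> d <= t.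
Proof. intros; nra. Qed.

Lemma Cmod_ge0 a : 0 <= Cmod a.
Proof. apply sqrt_pos. Qed.

Lemma Cmod_sq a : Cmod a * Cmod a = Cre a * Cre a + Cim a * Cim a.
Proof. unfold Cmod. rewrite sqrt_sqrt; [ring | nra]. Qed.

Lemma Cmod_mul a b : Cmod (Cmul a b) = Cmod a * Cmod b.
Proof. unfold Cmod. rewrite <- sqrt_mult by nra. f_equal. csimpl. ring. Qed.

Lemma Cmod_conj a : Cmod (Cconj a) = Cmod a.
Proof. unfold Cmod. f_equal. csimpl. ring. Qed.

Lemma Cmod_real r : Cmod (mkC r 0) = Rabs r.
Proof.
  unfold Cmod. cbn [Cre Cim].
  replace (r ^ 2 + 0 ^ 2) with (Rsqr r) by (unfold Rsqr; ring). apply sqrt_Rsqr_abs.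
Qed.

Lemma Cmod_add_le a b : Cmod (Cadd a b) <= Cmod a + Cmod b.
Proof.
  pose proof (Cmod_ge0 a); pose proof (Cmod_ge0 b).
  pose proof (Cmod_sq a) as Ea; pose proof (Cmod_sq b) as Eb.
  assert (Hdot : Cre a * Cre b + Cim a * Cim b <= Cmod a * Cmod b).
  { apply le_of_sq_le; [nra |].
    replace (Cmod a * Cmod b * (Cmod a * Cmod b)) with ((Cmod a * Cmod a) * (Cmod b * Cmod b)) by ring.
    rewrite Ea, Eb. pose proof (Rle_0_sqr (Cre a * Cim b - Cim a * Cre b)); unfold Rsqr in *; nra. }
  apply sqrt_le_of_le_sq; [lra |]. csimpl. nra.
Qed.

Lemma Cre_le_Cmod a : Cre a <= Cmod a.
Proof. apply le_of_sq_le; [apply Cmod_ge0 |]. rewrite Cmod_sq. nra. Qed.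

Section VectorAlgebra.
Context {H : CHilbert}.
Implicit Types x y z : H.

Lemma hadd_0_l x : hadd hzero x = x.
Proof. rewrite hadd_comm; apply hadd_0. Qed.

Lemma hadd_cancel_l x y z : hadd x y = hadd x z -> y = z.
Proof.
  intro E. assert (E2 : hadd (hopp x) (hadd x y) = hadd (hopp x) (hadd x z)) by (rewrite E; reflexivity).
  rewrite !hadd_assoc, (hadd_comm _ (hopp x) x), hadd_opp, !hadd_0_l in E2. exact E2.
Qed.

Lemma hopp_unique x y : hadd x y = hzero -> y = hopp x.
Proof. intro E. apply (hadd_cancel_l x). rewrite E, hadd_opp; reflexivity. Qed.

Lemma hscal_C0 x : hscal C0 x = hzero.
Proof.
  assert (E : hscal (Cadd C0 C0) x = hadd (hscal C0 x) (hscal C0 x)) by apply hscal_adds.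
  replace (Cadd C0 C0) with C0 in E by (apply C_ext; csimpl; lra).
  apply (hadd_cancel_l (hscal C0 x)). rewrite hadd_0. symmetry; exact E.
Qed.

Lemma hadd_hscal_opp a b x : Cre a + Cre b = 0 -> Cim a + Cim b = 0 ->
  hadd (hscal a x) (hscal b x) = hzero.
Proof.
  intros. rewrite <- hscal_adds. replace (Cadd a b) with C0 by (apply C_ext; csimpl; lra).
  apply hscal_C0.
Qed.

Lemma hopp_hscal x : hopp x = hscal (mkC (-1) 0) x.
Proof. symmetry; apply hopp_unique. rewrite <- (hscal_1 _ x) at 1. apply hadd_hscal_opp; csimpl; lra. Qed.

Lemma hadd_hsub x y : hadd y (hsub x y) = x.
Proof. unfold hsub. rewrite (hadd_comm _ x), hadd_assoc, hadd_opp, hadd_0_l. reflexivity. Qed.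

Lemma hsub_hadd x y : hsub (hadd x y) y = x.
Proof. unfold hsub. rewrite <- hadd_assoc, hadd_opp, hadd_0. reflexivity. Qed.

Lemma hadd_swap4 x y z (t : H) : hadd (hadd x y) (hadd z t) = hadd (hadd x z) (hadd y t).
Proof. rewrite <- !hadd_assoc. f_equal. rewrite !hadd_assoc. f_equal. apply hadd_comm. Qed.

Lemma hopp_hsub x y : hopp (hsub x y) = hsub y x.
Proof.
  symmetry; apply hopp_unique. unfold hsub.
  rewrite (hadd_comm _ y), hadd_swap4, hadd_opp, (hadd_comm _ (hopp y)), hadd_opp. apply hadd_0.
Qed.

End VectorAlgebra.

Definition is_semi_inner {H : CHilbert} (f : H -> H -> C) : Prop :=
  (forall x y z, f (hadd x y) z = Cadd (f x z) (f y z)) /\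
  (forall a x y, f (hscal a x) y = Cmul a (f x y)) /\
  (forall x y, f y x = Cconj (f x y)) /\
  (forall x, 0 <= Cre (f x x)).

Definition seminorm {H : CHilbert} (f : H -> H -> C) (x : H) : R := sqrt (Cre (f x x)).

Lemma hinner_semi_inner (H : CHilbert) : is_semi_inner (@hinner H).
Proof. repeat split. apply hinner_addl. apply hinner_scall. apply hinner_conj. apply hinner_pos. Qed.

Section SemiInner.
Context {H : CHilbert} {f : H -> H -> C} (Hf : is_semi_inner f).
Implicit Types x y z u v w : H.

Lemma semi_inner_diag_im x : Cim (f x x) = 0.
Proof. destruct Hf as (_ & _ & Hc & _). assert (E := f_equal Cim (Hc x x)). csimpl. lra. Qed.

Lemma semi_inner_addr x y z : f x (hadd y z) = Cadd (f x y) (f x z).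
Proof. destruct Hf as (Ha & _ & Hc & _). rewrite Hc, Ha, (Hc y x), (Hc z x). apply C_ext; csimpl; ring. Qed.

Lemma semi_inner_scalr a x y : f x (hscal a y) = Cmul (Cconj a) (f x y).
Proof. destruct Hf as (_ & Hs & Hc & _). rewrite Hc, Hs, (Hc y x). apply C_ext; csimpl; ring. Qed.

Lemma semi_inner_zero_l y : f hzero y = C0.
Proof. destruct Hf as (_ & Hs & _ & _). rewrite <- (hscal_C0 hzero), Hs. apply C_ext; csimpl; ring. Qed.

Lemma semi_inner_comb a b c d x1 y1 x2 y2 :
  f (hadd (hscal a x1) (hscal b y1)) (hadd (hscal c x2) (hscal d y2)) =
  Cadd (Cadd (Cmul (Cmul a (Cconj c)) (f x1 x2)) (Cmul (Cmul a (Cconj d)) (f x1 y2)))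
       (Cadd (Cmul (Cmul b (Cconj c)) (f y1 x2)) (Cmul (Cmul b (Cconj d)) (f y1 y2))).
Proof.
  destruct Hf as (Ha & Hs & _ & _).
  rewrite Ha, !Hs, !semi_inner_addr, !semi_inner_scalr. apply C_ext; csimpl; ring.
Qed.

Lemma semi_inner_quad a b x y :
  Cre (f (hadd (hscal a x) (hscal b y)) (hadd (hscal a x) (hscal b y))) =
  (Cre a * Cre a + Cim a * Cim a) * Cre (f x x) + (Cre b * Cre b + Cim b * Cim b) * Cre (f y y)
  + 2 * ((Cre a * Cre b + Cim a * Cim b) * Cre (f x y) - (Cim a * Cre b - Cre a * Cim b) * Cim (f x y)).
Proof.
  rewrite semi_inner_comb. destruct Hf as (_ & _ & Hc & _). rewrite (Hc x y).
  pose proof (semi_inner_diag_im x). pose proof (semi_inner_diag_im y). csimpl. nra.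
Qed.

(* Positivity of the form at the three vectors [Q x - <x,y> y], [-<y,x> x + P y] and
   [x - <x,y> y]; together they cover the degenerate cases [P = 0] and [Q = 0]. *)
Lemma cauchy_schwarz_sq x y :
  Cre (f x y) * Cre (f x y) + Cim (f x y) * Cim (f x y) <= Cre (f x x) * Cre (f y y).
Proof.
  pose proof Hf as (_ & _ & _ & Hp).
  set (p1 := Cre (f x y)). set (p2 := Cim (f x y)). set (P := Cre (f x x)). set (Q := Cre (f y y)).
  pose proof (Hp (hadd (hscal (mkC Q 0) x) (hscal (mkC (-p1) (-p2)) y))) as E1.
  pose proof (Hp (hadd (hscal (mkC (-p1) p2) x) (hscal (mkC P 0) y))) as E2.
  pose proof (Hp (hadd (hscal (mkC 1 0) x) (hscal (mkC (-p1) (-p2)) y))) as E3.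
  rewrite semi_inner_quad in E1, E2, E3. cbn [Cre Cim] in E1, E2, E3. fold p1 p2 P Q in E1, E2, E3.
  assert (HP : 0 <= P) by apply Hp. assert (HQ : 0 <= Q) by apply Hp.
  set (m := p1 * p1 + p2 * p2). fold m.
  assert (E1' : 0 <= Q * (P * Q - m)) by (unfold m; nra).
  assert (E2' : 0 <= P * (P * Q - m)) by (unfold m; nra).
  assert (E3' : 0 <= P + m * Q - 2 * m) by (unfold m; nra).
  destruct (Rle_lt_or_eq_dec 0 Q HQ) as [HQ' | HQ'].
  - apply Rmult_le_reg_l with Q; auto. nra.
  - destruct (Rle_lt_or_eq_dec 0 P HP) as [HP' | HP'].
    + apply Rmult_le_reg_l with P; auto. nra.
    + rewrite <- HQ', <- HP' in *. unfold m in *. nra.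
Qed.

Lemma seminorm_ge0 x : 0 <= seminorm f x.
Proof. apply sqrt_pos. Qed.

Lemma seminorm_sq x : seminorm f x * seminorm f x = Cre (f x x).
Proof. destruct Hf as (_ & _ & _ & Hp). apply sqrt_sqrt, Hp. Qed.

Lemma cauchy_schwarz x y : Cmod (f x y) <= seminorm f x * seminorm f y.
Proof.
  pose proof (seminorm_ge0 x); pose proof (seminorm_ge0 y).
  apply le_of_sq_le; [nra |]. rewrite Cmod_sq.
  replace (seminorm f x * seminorm f y * (seminorm f x * seminorm f y))
    with ((seminorm f x * seminorm f x) * (seminorm f y * seminorm f y)) by ring.
  rewrite !seminorm_sq. apply cauchy_schwarz_sq.
Qed.

Lemma Cre_le_seminorm_mul x y : Cre (f x y) <= seminorm f x * seminorm f y.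
Proof. eapply Rle_trans; [apply Cre_le_Cmod | apply cauchy_schwarz]. Qed.

Lemma seminorm_zero : seminorm f hzero = 0.
Proof. unfold seminorm. rewrite semi_inner_zero_l. csimpl. apply sqrt_0. Qed.

Lemma seminorm_add_le x y : seminorm f (hadd x y) <= seminorm f x + seminorm f y.
Proof.
  pose proof (seminorm_ge0 x); pose proof (seminorm_ge0 y).
  unfold seminorm at 1. apply sqrt_le_of_le_sq; [lra |].
  rewrite <- (hscal_1 _ x), <- (hscal_1 _ y), semi_inner_quad, !hscal_1. csimpl.
  pose proof (Cre_le_seminorm_mul x y). rewrite <- (seminorm_sq x), <- (seminorm_sq y). nra.
Qed.

Lemma seminorm_scal a x : seminorm f (hscal a x) = Cmod a * seminorm f x.
Proof.
  pose proof Hf as (_ & Hs & _ & Hp). unfold seminorm, Cmod.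
  rewrite Hs, semi_inner_scalr, <- sqrt_mult by (try apply Hp; nra). f_equal.
  pose proof (semi_inner_diag_im x). csimpl. nra.
Qed.

Lemma seminorm_opp x : seminorm f (hopp x) = seminorm f x.
Proof. rewrite hopp_hscal, seminorm_scal, Cmod_real, Rabs_left by lra. ring. Qed.

(* The vector [w := 2 <u,e> e - u] has the same seminorm as [u] when [<e,e> = 1],
   and [<v,w> + <v,u> = 2 <e,u> <v,e>]. *)
Lemma buzano e u v : Cre (f e e) = 1 ->
  2 * (Cmod (f e u) * Cmod (f v e)) <= seminorm f u * seminorm f v + Cmod (f v u).
Proof.
  intro He. pose proof Hf as (_ & _ & Hc & _).
  set (c := f u e).
  set (w := hadd (hscal (mkC (2 * Cre c) (2 * Cim c)) e) (hscal (mkC (-1) 0) u)).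
  assert (Hw : seminorm f w = seminorm f u).
  { unfold seminorm, w. f_equal. rewrite semi_inner_quad, He, (Hc u e). fold c. csimpl. ring. }
  assert (E : Cmul (mkC (2 * Cre c) (- (2 * Cim c))) (f v e) = Cadd (f v w) (f v u)).
  { unfold w. rewrite semi_inner_addr, !semi_inner_scalr. apply C_ext; csimpl; ring. }
  assert (E2 : Cmod (Cmul (mkC (2 * Cre c) (- (2 * Cim c))) (f v e)) = 2 * (Cmod (f e u) * Cmod (f v e))).
  { replace (mkC (2 * Cre c) (- (2 * Cim c))) with (Cmul (mkC 2 0) (Cconj c)) by (apply C_ext; csimpl; ring).
    rewrite !Cmod_mul, Cmod_conj, Cmod_real, Rabs_pos_eq, (Hc u e), Cmod_conj by lra. fold c. ring. }
  rewrite <- E2, E. eapply Rle_trans; [apply Cmod_add_le |].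
  pose proof (cauchy_schwarz v w). rewrite Hw in *. nra.
Qed.

(* Test the hypothesis at [w := a + <a,b> b]. *)
Lemma Cmod_le_of_product_le a b K : 0 <= K ->
  (forall w, Cmod (f a w) * Cmod (f w b) <= K * (seminorm f w * seminorm f w)) ->
  Cmod (f a b) <= K.
Proof.
  intros HK Kb. pose proof Hf as (Ha & Hs & _ & Hp).
  set (p := f a b). set (w := hadd (hscal C1 a) (hscal p b)).
  set (Pa := Cre (f a a)). set (Qb := Cre (f b b)).
  set (m := Cre p * Cre p + Cim p * Cim p).
  assert (HPa : 0 <= Pa) by apply Hp. assert (HQb : 0 <= Qb) by apply Hp.
  assert (CS : m <= Pa * Qb) by apply cauchy_schwarz_sq.
  assert (E1 : Cmod (f a w) = Pa + m).
  { unfold w. rewrite semi_inner_addr, !semi_inner_scalr. fold p.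
    rewrite <- (Rabs_pos_eq (Pa + m)) by (unfold m; nra). rewrite <- Cmod_real. f_equal.
    pose proof (semi_inner_diag_im a). apply C_ext; csimpl; unfold Pa, m; nra. }
  assert (E2 : Cmod (f w b) = Cmod p * (1 + Qb)).
  { unfold w. rewrite Ha, !Hs. fold p.
    replace (Cadd (Cmul C1 p) (Cmul p (f b b))) with (Cmul p (mkC (1 + Qb) 0)).
    - rewrite Cmod_mul, Cmod_real, Rabs_pos_eq by lra. reflexivity.
    - pose proof (semi_inner_diag_im b). apply C_ext; csimpl; unfold Qb; nra. }
  assert (E3 : seminorm f w * seminorm f w = Pa + m * Qb + 2 * m).
  { rewrite seminorm_sq. unfold w. rewrite semi_inner_quad. fold Pa Qb p. csimpl. unfold m. ring. }
  pose proof (Kb w) as Kw. rewrite E1, E2, E3 in Kw.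
  pose proof (Cmod_ge0 p) as Hp0. pose proof (Cmod_sq p) as Hpsq. fold m in Hpsq.
  destruct (Rle_lt_or_eq_dec 0 _ Hp0) as [Hpp | Hp00]; [| rewrite <- Hp00; exact HK].
  assert (Hm : 0 < m) by nra.
  assert (Cmod p * (Pa + m * Qb + 2 * m) <= (Pa + m) * (Cmod p * (1 + Qb))) by nra.
  apply Rmult_le_reg_r with (Pa + m * Qb + 2 * m); nra.
Qed.

End SemiInner.

Lemma pow2_le_of_sq_le (h : nat -> R) : (forall k, 0 <= h k) ->
  (forall k, h k * h k <= h (S k)) -> forall k, h O ^ (2 ^ k) <= h k.
Proof.
  intros Hpos Hsq k. induction k as [| k IH]; [simpl; lra |].
  rewrite Nat.pow_succ_r', Nat.mul_comm, Nat.mul_succ_r, Nat.mul_1_r, pow_add.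
  assert (0 <= h O ^ (2 ^ k)) by (apply pow_le, Hpos).
  eapply Rle_trans; [| apply Hsq]. apply Rmult_le_compat; assumption.
Qed.

Lemma le_of_pow2_le (t M K : R) : 0 <= M ->
  (forall k, t ^ (2 ^ k) <= K * M ^ (2 ^ k)) -> t <= M.
Proof.
  intros HM Hk. destruct (Rle_or_lt t M) as [| Hlt]; [assumption | exfalso].
  destruct (Rle_lt_or_eq_dec 0 M HM) as [HMp | HM0].
  2: { specialize (Hk O). rewrite <- HM0 in Hk, Hlt. simpl in Hk. lra. }
  set (q := t / M).
  assert (Hq : 1 < q) by (unfold q; apply Rmult_lt_reg_r with M; [lra |]; field_simplify; lra).
  destruct (Pow_x_infinity q ltac:(rewrite Rabs_pos_eq; lra) (K + 1)) as [N HN].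
  specialize (HN (2 ^ N)%nat (Nat.lt_le_incl _ _ (Nat.pow_gt_lin_r 2 N ltac:(lia)))).
  specialize (Hk N). rewrite Rabs_pos_eq in HN by (apply pow_le; lra).
  replace t with (q * M) in Hk by (unfold q; field; lra).
  rewrite Rpow_mult_distr in Hk.
  assert (0 < M ^ (2 ^ N)) by (apply pow_lt; lra). nra.
Qed.

Lemma descent_eventually_lt (g a : nat -> R) (c B e : R) : 0 < c -> 0 < e ->
  (forall k, 0 <= a k) -> (forall k, g (S k) <= g k - c * (a k * a k)) ->
  (forall k, g k <= a k * B) -> exists k, g k < e.
Proof.
  intros Hc He Ha Hdec Hbound.
  destruct (classic (exists k, g k < e)) as [| Hnone]; [assumption | exfalso].
  assert (Hall : forall k, e <= g k).
  { intro k. destruct (Rle_or_lt e (g k)); [assumption | exfalso; eauto]. }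
  assert (HB : 0 < B).
  { destruct (Rle_or_lt B 0); [| assumption]. specialize (Hall O). specialize (Hbound O).
    pose proof (Ha O). nra. }
  set (dl := c * ((e / B) * (e / B))).
  assert (Hdl : 0 < dl) by (apply Rmult_lt_0_compat; [lra | apply Rmult_lt_0_compat; apply Rdiv_lt_0_compat; lra]).
  assert (Hstep : forall k, g (S k) <= g k - dl).
  { intro k. assert (e / B <= a k).
    { apply Rmult_le_reg_r with B; [lra |]. unfold Rdiv. rewrite Rmult_assoc, Rinv_l, Rmult_1_r by lra.
      specialize (Hall k). specialize (Hbound k). lra. }
    assert (0 <= e / B) by (left; apply Rdiv_lt_0_compat; lra).
    assert (e / B * (e / B) <= a k * a k) by nra.
    specialize (Hdec k). unfold dl. nra. }
  assert (Hlin : forall k, g k <= g O - INR k * dl).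
  { induction k; [simpl; lra |]. rewrite S_INR. specialize (Hstep k). lra. }
  destruct (INR_archimed dl (g O - e) Hdl) as [n Hn].
  specialize (Hlin n). specialize (Hall n). lra.
Qed.

Lemma le_of_forall_le_add_mul (a b K : R) : 0 <= K ->
  (forall d, 0 < d -> a <= b + K * d) -> a <= b.
Proof.
  intros HK Hd. apply Rle_plus_epsilon. intros eps Heps.
  specialize (Hd (eps / (K + 1)) ltac:(apply Rdiv_lt_0_compat; lra)).
  assert (K * (eps / (K + 1)) <= eps).
  { unfold Rdiv. apply Rmult_le_reg_r with (K + 1); [lra |].
    rewrite !Rmult_assoc, Rinv_l by lra. nra. }
  lra.
Qed.

Lemma supR_spec (E : R -> Prop) (B : R) : 0 <= B -> (forall r, E r -> r <= B) ->
  is_lub (fun r => E r \/ r = 0) (supR E).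
Proof.
  intros H0 HB. unfold supR. apply epsilon_spec.
  destruct (completeness (fun r => E r \/ r = 0)) as [m Hm].
  - exists B. intros r [Hr | Hr]; [apply HB; auto | lra].
  - exists 0; auto.
  - exists m; exact Hm.
Qed.

Lemma supR_ge (E : R -> Prop) (B r : R) : 0 <= B -> (forall r, E r -> r <= B) ->
  E r -> r <= supR E.
Proof. intros H0 HB Er. apply (supR_spec E B H0 HB). auto. Qed.

Lemma supR_ge0 (E : R -> Prop) (B : R) : 0 <= B -> (forall r, E r -> r <= B) -> 0 <= supR E.
Proof. intros H0 HB. apply (supR_spec E B H0 HB). auto. Qed.

Lemma supR_le (E : R -> Prop) (B : R) : 0 <= B -> (forall r, E r -> r <= B) -> supR E <= B.
Proof. intros H0 HB. apply (supR_spec E B H0 HB). intros r [Hr | Hr]; [apply HB; auto | lra]. Qed.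

Definition A_symmetric {H : CHilbert} (A U : H -> H) : Prop :=
  forall u v, innerA A (U u) v = innerA A u (U v).

Definition A_bounded {H : CHilbert} (A U : H -> H) : Prop :=
  exists M, 0 <= M /\ forall z, normA A (U z) <= M * normA A z.

Section Operators.
Context {H : CHilbert}.
Implicit Types (U T : H -> H) (x y : H).

Lemma hnorm_ge0 x : 0 <= hnorm x.
Proof. apply sqrt_pos. Qed.

Lemma hnorm_sq x : hnorm x * hnorm x = Cre (hinner x x).
Proof. apply (seminorm_sq (hinner_semi_inner H)). Qed.

Lemma linear_zero T : is_linear T -> T hzero = hzero.
Proof. intros [_ Hs]. rewrite <- (hscal_C0 (@hzero H)) at 1. rewrite Hs. apply hscal_C0. Qed.

Lemma linear_comb T a b x y : is_linear T ->
  T (hadd (hscal a x) (hscal b y)) = hadd (hscal a (T x)) (hscal b (T y)).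
Proof. intros [Ha Hs]. rewrite Ha, !Hs. reflexivity. Qed.

Lemma is_linear_comp U T : is_linear U -> is_linear T -> is_linear (fun x => U (T x)).
Proof. intros [UA US] [TA TS]. split; intros; rewrite ?TA, ?UA, ?TS, ?US; reflexivity. Qed.

Lemma is_linear_add U T : is_linear U -> is_linear T -> is_linear (fun x => hadd (U x) (T x)).
Proof.
  intros [UA US] [TA TS]. split; intros.
  - rewrite UA, TA. apply hadd_swap4.
  - rewrite US, TS, hscal_addv. reflexivity.
Qed.

Lemma bounded_nonneg T : is_bounded T -> exists M, 0 <= M /\ forall x, hnorm (T x) <= M * hnorm x.
Proof.
  intros [_ [M HM]]. exists (Rmax M 0). split; [apply Rmax_r |].
  intro x. eapply Rle_trans; [apply HM |]. apply Rmult_le_compat_r; [apply sqrt_pos | apply Rmax_l].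
Qed.

Lemma is_bounded_comp U T : is_bounded U -> is_bounded T -> is_bounded (fun x => U (T x)).
Proof.
  intros BU BT. split; [apply is_linear_comp; [apply BU | apply BT] |].
  destruct (bounded_nonneg U BU) as [M1 [H1 HM1]], (bounded_nonneg T BT) as [M2 [H2 HM2]].
  exists (M1 * M2). intro x. eapply Rle_trans; [apply HM1 |].
  rewrite Rmult_assoc. apply Rmult_le_compat_l; auto.
Qed.

Lemma is_bounded_add U T : is_bounded U -> is_bounded T -> is_bounded (fun x => hadd (U x) (T x)).
Proof.
  intros BU BT. split; [apply is_linear_add; [apply BU | apply BT] |].
  destruct (bounded_nonneg U BU) as [M1 [H1 HM1]], (bounded_nonneg T BT) as [M2 [H2 HM2]].
  exists (M1 + M2). intro x. eapply Rle_trans; [apply (seminorm_add_le (hinner_semi_inner H)) |].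
  pose proof (HM1 x); pose proof (HM2 x). change (hnorm (U x) + hnorm (T x) <= (M1 + M2) * hnorm x). lra.
Qed.

Lemma hnorm_iter_le U M : (forall x, hnorm (U x) <= M * hnorm x) -> 0 <= M ->
  forall n x, hnorm (Nat.iter n U x) <= M ^ n * hnorm x.
Proof.
  intros HM HM0 n. induction n as [| n IH]; intro x; [simpl; lra |].
  simpl. eapply Rle_trans; [apply HM |]. rewrite Rmult_assoc. apply Rmult_le_compat_l; auto.
Qed.

End Operators.

Lemma normA_ge0 {H : CHilbert} (A : H -> H) (v : H) : 0 <= normA A v.
Proof. apply sqrt_pos. Qed.

Section ASuprema.
Context {H : CHilbert} {A : H -> H}.
Implicit Types (T U : H -> H) (v x z : H).

(* A vector with [||x||_A = 0] contributes the ratio [_ / 0 = 0]. *)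
Lemma opnormA_ratio_le T M : 0 <= M -> (forall z, normA A (T z) <= M * normA A z) ->
  forall r, (exists x, in_closure_range A x /\ x <> hzero /\ r = normA A (T x) / normA A x) -> r <= M.
Proof.
  intros HM0 HM r [x [_ [_ ->]]]. destruct (Rle_lt_or_eq_dec 0 _ (normA_ge0 A x)) as [Hp | H0].
  - unfold Rdiv. apply Rmult_le_reg_r with (normA A x); [exact Hp |].
    rewrite Rmult_assoc, Rinv_l, Rmult_1_r by lra. apply HM.
  - rewrite <- H0. unfold Rdiv. rewrite Rinv_0, Rmult_0_r. exact HM0.
Qed.

Lemma opnormA_ge0 T : A_bounded A T -> 0 <= opnormA A T.
Proof. intros [M [HM0 HM]]. exact (supR_ge0 _ M HM0 (opnormA_ratio_le T M HM0 HM)). Qed.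

Lemma numrangeA_le U B : 0 <= B ->
  (forall z, Cmod (innerA A (U z) z) <= B * (normA A z * normA A z)) ->
  forall r, (exists lam, numrangeA A U lam /\ r = Cmod lam) -> r <= B.
Proof. intros HB0 HB r [lam [[x [Hx ->]] ->]]. specialize (HB x). rewrite Hx in HB. lra. Qed.

Lemma wA_ge0 U B : 0 <= B ->
  (forall z, Cmod (innerA A (U z) z) <= B * (normA A z * normA A z)) -> 0 <= wA A U.
Proof. intros HB0 HB. exact (supR_ge0 _ B HB0 (numrangeA_le U B HB0 HB)). Qed.

Lemma wA_le U K : 0 <= K -> (forall x, normA A x = 1 -> Cmod (innerA A (U x) x) <= K) -> wA A U <= K.
Proof. intros HK HU. apply supR_le; [exact HK |]. intros r [lam [[x [Hx ->]] ->]]. auto. Qed.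

End ASuprema.

Definition descent_step {H : CHilbert} (A : H -> H) (c : R) (r : H) : H :=
  hadd (hscal C1 r) (hscal (mkC (- c) 0) (A r)).

Section PositiveOperator.
Context {H : CHilbert} {A : H -> H} (HA : positive_op A).
Implicit Types (U T : H -> H) (u v x y z : H).

(* Polarization: [<A w, w>] is real for [w = u + v] and for [w = u + i v]. *)
Lemma positive_op_selfadjoint u v : hinner (A u) v = hinner u (A v).
Proof.
  destruct HA as [[HL _] Hpos]. pose proof (hinner_semi_inner H) as F.
  pose proof (Hpos (hadd (hscal (mkC 1 0) u) (hscal (mkC 1 0) v))) as [E1 _].
  pose proof (Hpos (hadd (hscal (mkC 1 0) u) (hscal (mkC 0 1) v))) as [E2 _].
  rewrite (linear_comb _ _ _ _ _ HL), (semi_inner_comb F) in E1.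
  rewrite (linear_comb _ _ _ _ _ HL), (semi_inner_comb F) in E2.
  destruct (Hpos u) as [Hu _], (Hpos v) as [Hv _].
  rewrite (hinner_conj _ (A v) u). apply C_ext; csimpl; lra.
Qed.

Lemma innerA_semi_inner : is_semi_inner (innerA A).
Proof.
  destruct HA as [[[Ha Hs] _] Hpos]. unfold innerA. repeat split.
  - intros x y z. rewrite Ha. apply hinner_addl.
  - intros a x y. rewrite Hs. apply hinner_scall.
  - intros x y. rewrite positive_op_selfadjoint. apply hinner_conj.
  - intro x. apply Hpos.
Qed.

Lemma A_symmetric_add U T : A_symmetric A U -> A_symmetric A T ->
  A_symmetric A (fun x => hadd (U x) (T x)).
Proof.
  intros SU ST u v. rewrite (proj1 innerA_semi_inner), (semi_inner_addr innerA_semi_inner), SU, ST.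
  reflexivity.
Qed.

Lemma normA_le_hnorm : exists K, 0 <= K /\ forall v, normA A v <= K * hnorm v.
Proof.
  destruct (bounded_nonneg A (proj1 HA)) as [M [HM0 HM]].
  exists (sqrt M). split; [apply sqrt_pos |]. intro v.
  pose proof (sqrt_pos M); pose proof (hnorm_ge0 v).
  unfold normA. apply sqrt_le_of_le_sq; [apply Rmult_le_pos; apply sqrt_pos |].
  replace (sqrt M * hnorm v * (sqrt M * hnorm v)) with ((sqrt M * sqrt M) * (hnorm v * hnorm v)) by ring.
  rewrite sqrt_sqrt by auto. unfold innerA.
  eapply Rle_trans; [apply (Cre_le_seminorm_mul (hinner_semi_inner H)) |].
  change (hnorm (A v) * hnorm v <= M * (hnorm v * hnorm v)). specialize (HM v). nra.
Qed.

Lemma normA_iter_sq_le U : A_symmetric A U -> forall m z,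
  normA A (Nat.iter m U z) * normA A (Nat.iter m U z) <= normA A z * normA A (Nat.iter (m + m) U z).
Proof.
  intros Hsym. pose proof innerA_semi_inner as F.
  assert (Hsymn : forall n u v, innerA A (Nat.iter n U u) v = innerA A u (Nat.iter n U v)).
  { induction n as [| n IH]; intros u v; [reflexivity |].
    rewrite Nat.iter_succ, Hsym, IH, <- Nat.iter_succ_r. reflexivity. }
  intros m z. change (normA A) with (seminorm (innerA A)).
  rewrite (seminorm_sq F), Hsymn, <- Nat.iter_add. apply (Cre_le_seminorm_mul F).
Qed.

(* Iterating [||U z||_A^2 <= ||z||_A ||U^2 z||_A] gives
   [(||U z||_A / ||z||_A)^(2^k) <= ||U^(2^k) z||_A / ||z||_A], which grows at most like [M^(2^k)]. *)
Lemma A_bounded_of_symmetric U : is_bounded U -> A_symmetric A U -> A_bounded A U.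
Proof.
  intros BU Hsym. destruct (bounded_nonneg U BU) as [M [HM0 HM]].
  destruct normA_le_hnorm as [K [HK HKv]].
  exists M. split; [exact HM0 |]. intro z.
  set (d := normA A z). assert (Hd : 0 <= d) by apply sqrt_pos.
  pose proof (normA_ge0 A) as Hpos.
  destruct (Rle_lt_or_eq_dec 0 d Hd) as [Hdp | Hd0].
  2: { pose proof (normA_iter_sq_le U Hsym 1 z) as E. simpl in E. fold d in E. rewrite <- Hd0 in *.
       pose proof (Hpos (U z)). nra. }
  set (h := fun k => normA A (Nat.iter (2 ^ k) U z) / d).
  assert (Hh : forall k, h O ^ (2 ^ k) <= h k).
  { apply pow2_le_of_sq_le.
    - intro k. unfold Rdiv; apply Rmult_le_pos; [apply Hpos | left; apply Rinv_0_lt_compat; lra].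
    - intro k. unfold h. replace (2 ^ S k)%nat with (2 ^ k + 2 ^ k)%nat by (simpl; lia).
      pose proof (normA_iter_sq_le U Hsym (2 ^ k) z) as E. fold d in E.
      apply Rmult_le_reg_r with (d * d); [nra |]. field_simplify; lra. }
  assert (Hbound : forall k, h O ^ (2 ^ k) <= (K * hnorm z / d) * M ^ (2 ^ k)).
  { intro k. eapply Rle_trans; [apply Hh |]. unfold h, Rdiv.
    apply Rmult_le_reg_r with d; [lra |]. rewrite !Rmult_assoc, Rinv_l, Rmult_1_r by lra.
    eapply Rle_trans; [apply HKv |].
    apply Rle_trans with (K * (M ^ (2 ^ k) * hnorm z)).
    + apply Rmult_le_compat_l; [exact HK | apply hnorm_iter_le; assumption].
    + right. field. lra. }
  pose proof (le_of_pow2_le _ _ _ HM0 Hbound) as Hle. unfold h in Hle. simpl in Hle.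
  apply Rmult_le_reg_r with (/ d); [apply Rinv_0_lt_compat; lra |].
  rewrite Rmult_assoc, Rinv_r, Rmult_1_r by lra. exact Hle.
Qed.

Lemma hnorm_A_sq_le M : 0 <= M -> (forall x, hnorm (A x) <= M * hnorm x) ->
  forall v, hnorm (A v) * hnorm (A v) <= M * Cre (innerA A v v).
Proof.
  intros HM0 HM v. pose proof innerA_semi_inner as F. pose proof (hinner_semi_inner H) as Fh.
  set (t := hnorm (A v) * hnorm (A v)). set (a := normA A v). set (b := normA A (A v)).
  assert (Ht : t <= a * b).
  { unfold t. rewrite hnorm_sq. apply (Cre_le_seminorm_mul F). }
  assert (Hb : b * b <= M * t).
  { unfold b, t. change (normA A) with (seminorm (innerA A)). rewrite (seminorm_sq F).
    eapply Rle_trans; [apply (Cre_le_seminorm_mul Fh) |].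
    change (hnorm (A (A v)) * hnorm (A v) <= M * (hnorm (A v) * hnorm (A v))).
    pose proof (HM (A v)). pose proof (hnorm_ge0 (A v)). nra. }
  assert (Ha : a * a = Cre (innerA A v v)) by apply (seminorm_sq F).
  assert (0 <= a) by apply sqrt_pos. assert (0 <= b) by apply sqrt_pos.
  assert (0 <= t) by (unfold t; nra).
  rewrite <- Ha. destruct (Rle_lt_or_eq_dec 0 t ltac:(assumption)) as [Htp | Ht0]; [| rewrite <- Ht0; nra].
  apply Rmult_le_reg_r with t; [exact Htp |]. nra.
Qed.

Section Descent.
Variables (M c : R).
Hypotheses (Hc : 0 < c) (HcM : c * M = 1) (HM : forall x, hnorm (A x) <= M * hnorm x).

Let HM0 : 0 <= M.
Proof. assert (M = / c) by (field_simplify_eq; lra). subst M. left; apply Rinv_0_lt_compat, Hc. Qed.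

Lemma descent_step_hnorm_le r : hnorm (descent_step A c r) <= hnorm r.
Proof.
  pose proof (hinner_semi_inner H) as Fh. pose proof innerA_semi_inner as F.
  apply le_of_sq_le; [apply sqrt_pos |]. rewrite !hnorm_sq.
  unfold descent_step. rewrite (semi_inner_quad Fh). cbn [Cre Cim Defs.C1].
  rewrite (hinner_conj _ (A r) r). cbn [Cre Cim Cconj]. fold (innerA A r r).
  rewrite <- (hnorm_sq (A r)).
  pose proof (hnorm_A_sq_le M HM0 HM r). pose proof (proj2 (proj2 (proj2 F)) r).
  assert (c * c * (M * Cre (innerA A r r)) = c * Cre (innerA A r r))
    by (rewrite <- Rmult_assoc, (Rmult_assoc c c M), HcM; ring).
  assert (c * c * (hnorm (A r) * hnorm (A r)) <= c * c * (M * Cre (innerA A r r)))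
    by (apply Rmult_le_compat_l; nra).
  nra.
Qed.

Lemma descent_step_normA_le r :
  Cre (innerA A (descent_step A c r) (descent_step A c r))
    <= Cre (innerA A r r) - c * (hnorm (A r) * hnorm (A r)).
Proof.
  pose proof (hinner_semi_inner H) as Fh. pose proof innerA_semi_inner as F.
  unfold descent_step. rewrite (semi_inner_quad F). cbn [Cre Cim Defs.C1].
  change (innerA A r (A r)) with (hinner (A r) (A r)).
  rewrite (semi_inner_diag_im Fh), <- hnorm_sq.
  assert (HAA : Cre (innerA A (A r) (A r)) <= M * (hnorm (A r) * hnorm (A r))).
  { eapply Rle_trans; [apply (Cre_le_seminorm_mul Fh) |].
    change (hnorm (A (A r)) * hnorm (A r) <= M * (hnorm (A r) * hnorm (A r))).
    pose proof (HM (A r)). pose proof (hnorm_ge0 (A r)). nra. }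
  assert (c * c * (M * (hnorm (A r) * hnorm (A r))) = c * (hnorm (A r) * hnorm (A r)))
    by (rewrite <- Rmult_assoc, (Rmult_assoc c c M), HcM; ring).
  assert (c * c * Cre (innerA A (A r) (A r)) <= c * c * (M * (hnorm (A r) * hnorm (A r))))
    by (apply Rmult_le_compat_l; nra).
  nra.
Qed.

End Descent.

Lemma descent_step_range c r y z : hadd r (A y) = z ->
  hadd (descent_step A c r) (A (hadd y (hscal (mkC c 0) r))) = z.
Proof.
  intro Hy. destruct (proj1 (proj1 HA)) as [Ha Hs]. unfold descent_step.
  rewrite Ha, Hs, hscal_1, hadd_swap4, Hy, hadd_hscal_opp by (cbn; lra). apply hadd_0.
Qed.

(* Gradient descent [r <- r - A r / M] on [r |-> ||r||_A^2] from [z] stays in [z + R(A)]; it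
   drives [||r||_A] to 0 because each step lowers [||r||_A^2] by [||A r||^2 / M], while
   [||r||_A^2 <= ||A r|| ||z||]. *)
Lemma normA_dist_range_lt z e : 0 < e -> exists y, normA A (hsub z (A y)) < e.
Proof.
  intro He. destruct (bounded_nonneg A (proj1 HA)) as [M0 [HM0 HM]].
  set (M := M0 + 1). set (c := / M).
  assert (Hc : 0 < c) by (apply Rinv_0_lt_compat; unfold M; lra).
  assert (HcM : c * M = 1) by (unfold c; field; unfold M; lra).
  assert (HMb : forall x, hnorm (A x) <= M * hnorm x).
  { intro x. specialize (HM x). pose proof (hnorm_ge0 x). unfold M. nra. }
  set (r := fun k => Nat.iter k (descent_step A c) z).
  assert (Hrange : forall k, exists y, hadd (r k) (A y) = z).
  { induction k as [| k [y Hy]].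
    - exists hzero. simpl. rewrite (linear_zero A (proj1 (proj1 HA))). apply hadd_0.
    - eexists. apply (descent_step_range c (r k) y z Hy). }
  assert (Hhnorm : forall k, hnorm (r k) <= hnorm z).
  { induction k; [apply Rle_refl |]. eapply Rle_trans; [apply (descent_step_hnorm_le M c) |]; auto. }
  destruct (descent_eventually_lt (fun k => Cre (innerA A (r k) (r k))) (fun k => hnorm (A (r k)))
              c (hnorm z) (e * e) Hc ltac:(nra)) as [k Hk].
  - intro k. apply sqrt_pos.
  - intro k. apply (descent_step_normA_le M c); assumption.
  - intro k. eapply Rle_trans; [apply (Cre_le_seminorm_mul (hinner_semi_inner H)) |].
    apply Rmult_le_compat_l; [apply sqrt_pos | apply Hhnorm].
  - destruct (Hrange k) as [y Hy]. exists y. rewrite <- Hy, hsub_hadd.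
    unfold normA. rewrite <- (sqrt_square e) by lra. apply sqrt_lt_1_alt.
    split; [apply (proj2 (proj2 (proj2 innerA_semi_inner))) | exact Hk].
Qed.

Lemma normA_le_opnormA_range T y : A_bounded A T ->
  normA A (T (A y)) <= opnormA A T * normA A (A y).
Proof.
  intros [M [HM0 HM]]. destruct (Rle_lt_or_eq_dec 0 _ (normA_ge0 A (A y))) as [Hp | H0].
  - assert (Hratio : normA A (T (A y)) / normA A (A y) <= opnormA A T).
    { apply (supR_ge _ M _ HM0 (opnormA_ratio_le T M HM0 HM)). exists (A y). repeat split.
      - intros eps Heps. exists y. unfold hsub. rewrite hadd_opp.
        change (seminorm (@hinner H) hzero < eps). rewrite (seminorm_zero (hinner_semi_inner H)). exact Heps.
      - intro E. rewrite E in Hp. change (0 < seminorm (innerA A) hzero) in Hp.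
        rewrite (seminorm_zero innerA_semi_inner) in Hp. lra. }
    unfold Rdiv in Hratio. apply Rmult_le_reg_r with (/ normA A (A y)); [apply Rinv_0_lt_compat; exact Hp |].
    rewrite Rmult_assoc, Rinv_r, Rmult_1_r by lra. exact Hratio.
  - pose proof (HM (A y)) as E. rewrite <- H0, Rmult_0_r in *. exact E.
Qed.

Lemma normA_le_opnormA T : is_linear T -> A_bounded A T ->
  forall z, normA A (T z) <= opnormA A T * normA A z.
Proof.
  intros LT BT z. pose proof innerA_semi_inner as F.
  pose proof (opnormA_ge0 T BT) as HN. pose proof BT as [M [HM0 HM]].
  apply (le_of_forall_le_add_mul _ _ (opnormA A T + M)); [lra |]. intros d Hd.
  destruct (normA_dist_range_lt z d Hd) as [y Hy]. set (v := hsub z (A y)) in Hy.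
  assert (Ez : z = hadd (A y) v) by (symmetry; apply hadd_hsub).
  assert (EAy : A y = hadd z (hopp v)) by (unfold v; rewrite hopp_hsub; symmetry; apply hadd_hsub).
  assert (Hy' : normA A (A y) <= normA A z + normA A v).
  { rewrite EAy at 1. change (normA A) with (seminorm (innerA A)).
    rewrite <- (seminorm_opp F v). apply (seminorm_add_le F). }
  assert (HTz : normA A (T z) <= normA A (T (A y)) + normA A (T v)).
  { rewrite Ez, (proj1 LT). apply (seminorm_add_le F). }
  pose proof (normA_le_opnormA_range T y BT). pose proof (HM v). pose proof (normA_ge0 A v).
  assert (opnormA A T * normA A (A y) <= opnormA A T * (normA A z + d)) by (apply Rmult_le_compat_l; lra).
  assert (M * normA A v <= M * d) by (apply Rmult_le_compat_l; lra).
  lra.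
Qed.

Lemma Cmod_innerA_le_wA U B : is_linear U -> 0 <= B ->
  (forall z, Cmod (innerA A (U z) z) <= B * (normA A z * normA A z)) ->
  forall z, Cmod (innerA A (U z) z) <= wA A U * (normA A z * normA A z).
Proof.
  intros LU HB0 HB z. pose proof innerA_semi_inner as (_ & Hs & _ & _).
  destruct (Rle_lt_or_eq_dec 0 _ (normA_ge0 A z)) as [Hp | H0].
  2: { specialize (HB z). rewrite <- H0, !Rmult_0_r in *. exact HB. }
  set (c := mkC (/ normA A z) 0). set (z' := hscal c z).
  assert (Hc : Cmod c = / normA A z) by (unfold c; rewrite Cmod_real, Rabs_pos_eq; [reflexivity | left; apply Rinv_0_lt_compat; exact Hp]).
  assert (Hz' : normA A z' = 1).
  { unfold z'. change (seminorm (innerA A) (hscal c z) = 1). rewrite (seminorm_scal innerA_semi_inner), Hc.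
    change (/ normA A z * normA A z = 1). field. lra. }
  assert (Hle : Cmod (innerA A (U z') z') <= wA A U).
  { apply (supR_ge _ B _ HB0 (numrangeA_le U B HB0 HB)). exists (innerA A (U z') z'). split; [| reflexivity].
    exists z'. split; [exact Hz' | reflexivity]. }
  unfold z' in Hle. rewrite (proj2 LU), Hs, (semi_inner_scalr innerA_semi_inner), !Cmod_mul, Cmod_conj, Hc in Hle.
  apply Rmult_le_reg_l with (/ normA A z * / normA A z); [apply Rmult_lt_0_compat; apply Rinv_0_lt_compat; exact Hp |].
  replace (/ normA A z * / normA A z * (wA A U * (normA A z * normA A z))) with (wA A U) by (field; lra).
  lra.
Qed.

Section Sharp.
Variables (X Xs : H -> H).
Hypothesis (SX : is_sharpA A X Xs).

Lemma innerA_sharp p q : innerA A (X p) q = innerA A p (Xs q).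
Proof.
  destruct SX as [[_ [Sadj [HS HAS]]] _]. unfold innerA.
  rewrite positive_op_selfadjoint, HS, <- HAS, positive_op_selfadjoint. reflexivity.
Qed.

Lemma innerA_sharp_r p q : innerA A q (X p) = innerA A (Xs q) p.
Proof.
  pose proof innerA_semi_inner as (_ & _ & Hc & _).
  rewrite (Hc (X p) q), innerA_sharp, <- Hc. reflexivity.
Qed.

Lemma A_symmetric_mul_sharp : A_symmetric A (fun x => X (Xs x)).
Proof. intros u v. rewrite innerA_sharp, innerA_sharp_r. reflexivity. Qed.

Lemma normA_sharp_sq w : normA A (Xs w) * normA A (Xs w) = Cre (innerA A (X (Xs w)) w).
Proof. rewrite innerA_sharp. apply (seminorm_sq innerA_semi_inner). Qed.

Lemma Cmod_innerA_sharp_le u w :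
  Cmod (innerA A (X u) w) <= (normA A u * normA A u + normA A (Xs w) * normA A (Xs w)) / 2.
Proof.
  rewrite innerA_sharp. eapply Rle_trans; [apply (cauchy_schwarz innerA_semi_inner) |].
  pose proof (Rle_0_sqr (normA A u - normA A (Xs w))). unfold Rsqr in *.
  change (seminorm (innerA A)) with (normA A). lra.
Qed.

End Sharp.

Lemma normA_sharp_sq_add_le X Xs Y Ys M : is_sharpA A X Xs -> is_sharpA A Y Ys ->
  (forall w, normA A (hadd (X (Xs w)) (Y (Ys w))) <= M * normA A w) ->
  forall w, normA A (Xs w) * normA A (Xs w) + normA A (Ys w) * normA A (Ys w) <= M * (normA A w * normA A w).
Proof.
  intros SX SY HM w. pose proof innerA_semi_inner as F.
  rewrite (normA_sharp_sq X Xs SX), (normA_sharp_sq Y Ys SY).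
  replace (Cre (innerA A (X (Xs w)) w) + Cre (innerA A (Y (Ys w)) w))
    with (Cre (innerA A (hadd (X (Xs w)) (Y (Ys w))) w)) by (rewrite (proj1 F); reflexivity).
  eapply Rle_trans; [apply (Cre_le_seminorm_mul F) |].
  pose proof (HM w). pose proof (normA_ge0 A w). change (seminorm (innerA A)) with (normA A). nra.
Qed.

Lemma sharp_product_le X Xs Y Ys x w : is_sharpA A X Xs -> is_sharpA A Y Ys -> normA A x = 1 ->
  Cmod (innerA A (X x) w) * Cmod (innerA A w (Y x))
    <= (normA A (Xs w) * normA A (Xs w) + normA A (Ys w) * normA A (Ys w)) / 4
       + Cmod (innerA A (X (Ys w)) w) / 2.
Proof.
  intros SX SY Hx. pose proof innerA_semi_inner as F.
  assert (Hxx : Cre (innerA A x x) = 1) by (rewrite <- (seminorm_sq F); change (normA A x * normA A x = 1); rewrite Hx; ring).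
  pose proof (buzano F x (Xs w) (Ys w) Hxx) as Bz.
  rewrite <- (innerA_sharp X Xs SX), <- (innerA_sharp X Xs SX (Ys w) w), <- (innerA_sharp_r Y Ys SY) in Bz.
  pose proof (Rle_0_sqr (normA A (Xs w) - normA A (Ys w))). unfold Rsqr in *.
  change (seminorm (innerA A)) with (normA A) in Bz. lra.
Qed.

End PositiveOperator.

Theorem mainTheorem18 (H : CHilbert) (A X Y Xs Ys : H -> H) :
  positive_op A ->
  in_BA A X -> in_BA A Y ->
  is_sharpA A X Xs -> is_sharpA A Y Ys ->
  wA A (fun x => Ys (X x)) <=
    opnormA A (fun x => hadd (X (Xs x)) (Y (Ys x))) / 4
    + wA A (fun x => X (Ys x)) / 2.
Proof.
  intros HA [BX _] [BY _] SX SY.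
  pose proof SX as [[BXs _] _]. pose proof SY as [[BYs _] _].
  set (T := fun x => hadd (X (Xs x)) (Y (Ys x))). set (U := fun x => X (Ys x)).
  assert (BT : is_bounded T) by (apply is_bounded_add; apply is_bounded_comp; assumption).
  assert (HT : A_bounded A T).
  { apply (A_bounded_of_symmetric HA T BT), (A_symmetric_add HA); apply (A_symmetric_mul_sharp HA);
      assumption. }
  pose proof (normA_le_opnormA HA T (proj1 BT) HT) as HN.
  pose proof (opnormA_ge0 T HT) as HN0.
  destruct HT as [MT [HMT HT]].
  assert (HU : forall w, Cmod (innerA A (U w) w) <= MT / 2 * (normA A w * normA A w)).
  { intro w. eapply Rle_trans; [apply (Cmod_innerA_sharp_le HA X Xs SX) |].
    pose proof (normA_sharp_sq_add_le HA X Xs Y Ys MT SX SY HT w). lra. }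
  pose proof (is_linear_comp X Ys (proj1 BX) (proj1 BYs) : is_linear U) as LU.
  pose proof (Cmod_innerA_le_wA HA U (MT / 2) LU ltac:(lra) HU) as HW.
  pose proof (wA_ge0 U (MT / 2) ltac:(lra) HU) as HW0.
  apply wA_le; [lra |]. intros x Hx.
  rewrite <- (innerA_sharp_r HA Y Ys SY).
  apply (Cmod_le_of_product_le (innerA_semi_inner HA)); [lra |]. intro w.
  eapply Rle_trans; [apply (sharp_product_le HA X Xs Y Ys x w SX SY Hx) |].
  pose proof (normA_sharp_sq_add_le HA X Xs Y Ys _ SX SY HN w). pose proof (HW w).
  change (seminorm (innerA A) w) with (normA A w).
  change (innerA A (X (Ys w)) w) with (innerA A (U w) w). lra.
Qed.
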